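(* Let $N \ge 1$ be an integer and let $a, b$ be $N$-bit integers in two's complement representation, with bits $a_0 a_1 \cdots a_{N-1}$ and $b_0 b_1 \cdots b_{N-1}$, where bit $0$ is the most significant bit. Define the bipolar encodings $\hat{a}_j = 2a_j - 1 \in \{-1,+1\}$ and $\hat{b}_j = 2b_j - 1 \in \{-1,+1\}$ for $0 \le j \le N-1$. For each $i$ with $0 \le i \le N-1$ set \[ D_i = \sum_{j=i}^{N-1} \bigl(\hat{a}_j - \hat{b}_j\bigr)\, 2^{N-2-j}, \qquad P = 2^{N-1-i}, \] \[ z_1 = D_i + P + 1,\quad z_2 = D_i + P,\quad z_3 = -D_i,\quad z_4 = -D_i - 1,\quad z_5 = D_i - P + 1,\quad z_6 = D_i - P, \] and \[ r_i = 2\bigl[\mathrm{ReLU}(z_1) - \mathrm{ReLU}(z_2) + \mathrm{ReLU}(z_3) - \mathrm{ReLU}(z_4) + \mathrm{ReLU}(z_5) - \mathrm{ReLU}(z_6)\bigr] - 3, \] where $\mathrm{ReLU}(t) = \max(t,0)$. Then for every $i \in \{0,\dots,N-1\}$ we have $r_i \in \{-1,+1\}$, and $r_i = 2c_i - 1$, where $c_i$ is bit $i$ (bit $0$ being the most significant) of the $N$-bit two's complement representation of $a - b$ (computed modulo $2^N$).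
   Context: Bipolar encoding maps a binary digit $0$ to $-1$ and $1$ to $+1$. An $N$-bit two's complement integer is represented by its bit string $b_0 b_1\cdots b_{N-1}$ with $b_0$ the most significant bit; the difference $a-b$ is taken in $N$-bit two's complement arithmetic, i.e. modulo $2^N$ (wrapping on overflow). *)

From mathcomp Require Import all_boot all_order all_algebra.
Set Implicit Arguments. Unset Strict Implicit. Unset Printing Implicit Defensive.
Import Order.TTheory GRing.Theory Num.Theory.

(* An N-bit word: bits indexed by 'I_N, bit 0 = most significant bit. *)

Definition bipolar {R : numDomainType} (x : bool) : R := (2 * x%:R - 1)%R.

Definition relu {R : numDomainType} (t : R) : R := Num.max t 0%R.

Definition tc_val (N : nat) (a : 'I_N -> bool) : int :=
  (\sum_(j < N) (if val j == 0%N then -1 else 1) * (a j)%:Z * (2 ^ (N.-1 - j))%:Z)%R.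

Definition tc_bit (N : nat) (z : int) (i : 'I_N) : bool :=
  odd ((`|(z %% (2 ^ N)%:Z)%Z|)%N %/ 2 ^ (N.-1 - i)).

Definition sub_bits (N : nat) (a b : 'I_N -> bool) (i : 'I_N) : bool :=
  tc_bit (tc_val a - tc_val b)%R i.

Local Open Scope ring_scope.

(* D_i = sum_{j=i}^{N-1} (â_j - b̂_j) 2^(N-2-j)  (integer exponent, may be -1) *)
Definition Dsum {R : numFieldType} (N : nat) (a b : 'I_N -> bool) (i : 'I_N) : R :=
  \sum_(j < N | (i <= j)%N) (bipolar (a j) - bipolar (b j)) * (2%:R : R) ^ (N%:Z - 2 - j%:Z).

Definition r_out {R : numFieldType} (N : nat) (a b : 'I_N -> bool) (i : 'I_N) : R :=
  let D : R := Dsum a b i in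
  let P : R := (2%:R : R) ^+ (N - 1 - i) in
  let z1 := D + P + 1 in
  let z2 := D + P in
  let z3 := - D in
  let z4 := - D - 1 in
  let z5 := D - P + 1 in
  let z6 := D - P in
  2 * (relu z1 - relu z2 + relu z3 - relu z4 + relu z5 - relu z6) - 3.

From mathcomp Require Import all_boot all_order all_algebra.
From mathcomp Require Import zify ring lra.
Import Order.TTheory GRing.Theory Num.Theory.

Set Implicit Arguments.
Unset Strict Implicit.
Local Open Scope ring_scope.

(* Let A and B be the suffixes a_i..a_{N-1} and b_i..b_{N-1} read as unsigned
   numbers, and P = 2^(N-1-i).  Then D_i = A - B lies strictly between -2P and
   2P, and a - b = A - B (mod 2P), so c_i, the bit of weight P of a - b, tells
   whether (A - B) mod 2P >= P.  On integers ReLU(z + 1) - ReLU(z) is the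
   indicator of z >= 0, so the network computes
   r_i = 2 ([D + P >= 0] + [D < 0] + [D >= P]) - 3, and for |D| < 2P the three
   indicators add up to 1 + c_i. *)

Lemma odd_divn (n P : nat) : (0 < P)%N -> odd (n %/ P) = (P <= n %% (P * 2))%N.
Proof.
move=> P_gt0; have := divn_modl n (dvdn_mulr 2 (dvdnn P)).
rewrite mulKn // modn2.
have : (n %% (P * 2) %/ P < 2)%N.
  by rewrite ltn_divLR // mulnC ltn_pmod ?muln_gt0 ?P_gt0.
case: (leqP P (n %% (P * 2))) => [le_P | lt_P]; last first.
  by rewrite divn_small //; case: odd.
by rewrite -divn_gt0 // in le_P; case: (_ %/ _)%N le_P => [|[|]] //; case: odd.
Qed.

Lemma modz_dvdm (m n d : int) : (d %| m)%Z -> ((n %% m)%Z = n %[mod d])%Z.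
Proof.
move=> d_dvd_m; apply/eqP; rewrite eqz_mod_dvd.
by rewrite {2}(divz_eq n m) opprD addrCA subrr addr0 rpredN dvdz_mull.
Qed.

Lemma dvdz_pow2_mull (c : int) (d e : nat) : (d <= e)%N ->
  ((2 ^ d)%N%:Z %| c * (2 ^ e)%N%:Z)%Z.
Proof. by move=> le_de; apply: dvdz_mull; rewrite dvdzE dvdn_exp2l. Qed.

Lemma tc_bitE N (z : int) (i : 'I_N) :
  tc_bit z i = ((2 ^ (N.-1 - i))%N%:Z <= z %% (2 ^ (N.-1 - i) * 2)%N%:Z)%Z.
Proof.
have pow_gt0 k : (0 < 2 ^ k)%N by rewrite expn_gt0.
have twoP : (2 ^ (N.-1 - i) * 2 = 2 ^ (N - i))%N.
  by rewrite -expnSr; congr (2 ^ _)%N; have := ltn_ord i; lia.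
rewrite /tc_bit odd_divn // -lez_nat -modz_nat.
rewrite gez0_abs ?modz_ge0 ?eqz_nat -?lt0n //.
by rewrite modz_dvdm // twoP dvdzE dvdn_exp2l ?leq_subr.
Qed.

Section SuffixValue.
Variables (N : nat) (a : 'I_N -> bool) (i : 'I_N).

Definition suffix_val : nat := (\sum_(j < N | i <= j) a j * 2 ^ (N.-1 - j))%N.

Lemma suffix_val_lt : (suffix_val < 2 ^ (N - i))%N.
Proof.
apply: (@leq_ltn_trans (\sum_(j < N | i <= j) 2 ^ (N.-1 - j))%N).
  by apply: leq_sum => j _; case: (a j); rewrite ?mul1n ?mul0n.
rewrite (reindex_inj rev_ord_inj) /=.
rewrite (eq_big (fun j : 'I_N => j < N - i)%N (fun j : 'I_N => 2 ^ j)%N); first last.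
- by move=> j _; congr (2 ^ _)%N; have := ltn_ord j; lia.
- by move=> j; have := ltn_ord j; have := ltn_ord i; lia.
rewrite -(big_ord_widen _ (fun j => 2 ^ j)%N) ?leq_subr //.
have := predn_exp 2 (N - i); rewrite /= mul1n => <-.
by rewrite ltn_predL expn_gt0.
Qed.

Lemma tc_val_suffix_dvd : ((2 ^ (N - i))%N%:Z %| tc_val a - suffix_val%:Z)%Z.
Proof.
rewrite /tc_val /suffix_val -natz natr_sum [X in _ - X]big_mkcond -sumrB.
apply: rpred_sum => j _; rewrite natz PoszM.
have := ltn_ord j; have := ltn_ord i.
case: eqP => /= [j0 | jn0]; case: (leqP i j) => [le_ij | lt_ji] i_lt j_lt.
- have -> : (2 ^ (N - i))%N%:Z = 2 * (2 ^ (N.-1 - j))%N%:Z.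
    by rewrite -PoszM -expnS; congr (Posz (2 ^ _)); lia.
  by apply/dvdzP; exists (- (a j)%:Z); ring.
- by rewrite subr0 dvdz_pow2_mull //; lia.
- by rewrite mul1r subrr dvdz0.
- by rewrite subr0 dvdz_pow2_mull //; lia.
Qed.

End SuffixValue.

Lemma Dsum_suffix (R : realFieldType) N (a b : 'I_N -> bool) (i : 'I_N) :
  Dsum a b i = ((suffix_val a i)%:Z - (suffix_val b i)%:Z)%:~R :> R.
Proof.
rewrite intrB -!pmulrn /Dsum /suffix_val !natr_sum -sumrB.
apply: eq_bigr => j _.
have -> : N%:Z - 2 - j%:Z = (N.-1 - j)%N%:Z - 1 by have := ltn_ord j; lia.
rewrite expfzDr ?pnatr_eq0 // -exprnP exprN1 /bipolar !natrM natrX.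
by field.
Qed.

Lemma relu_succ_sub (R : realDomainType) (z : int) :
  relu (z%:~R + 1 : R) - relu z%:~R = (0 <= z)%R%:R.
Proof.
rewrite /relu; have [z_ge0 | z_lt0] := lerP 0 z.
- have x_ge0 : 0 <= z%:~R :> R by rewrite ler0z.
  by rewrite !max_l ?ler_wpDr // addrAC subrr add0r.
- have x_le_m1 : z%:~R + 1 <= 0 :> R by rewrite -[1]/(1%:~R) -intrD lerz0; lia.
  by rewrite !max_r ?subrr // (le_trans _ x_le_m1) // lerDl.
Qed.

Definition bit_net {R : realDomainType} (D P : R) : R :=
  2 * (relu (D + P + 1) - relu (D + P) + relu (- D) - relu (- D - 1)
       + relu (D - P + 1) - relu (D - P)) - 3.

Lemma r_outE (R : realFieldType) N (a b : 'I_N -> bool) (i : 'I_N) :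
  r_out a b i = bit_net (Dsum a b i) (2 ^+ (N - 1 - i) : R).
Proof. by []. Qed.

Lemma le_modz_double (d p : int) : -(2 * p) < d < 2 * p ->
  (p <= d %% (2 * p))%Z = (p <= d) || (- p <= d < 0).
Proof.
case/andP=> lo hi; have [d_ge0 | d_lt0] := lerP 0 d.
- by rewrite modz_small ?d_ge0 // andbF orbF.
- rewrite -(modzDr d (2 * p)) modz_small; last by apply/andP; split; lia.
  by apply/idP/idP; lia.
Qed.

Lemma bit_net_int (R : realDomainType) (d p : int) : -(2 * p) < d < 2 * p ->
  bit_net d%:~R p%:~R = bipolar (p <= d %% (2 * p))%Z :> R.
Proof.
move=> bounds; rewrite le_modz_double //.
have := relu_succ_sub R (d + p); rewrite intrD.
have := relu_succ_sub R (- d - 1); rewrite intrB intrN rmorph1 subrK.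
have := relu_succ_sub R (d - p); rewrite intrB.
have -> : (0 <= d + p) = (- p <= d) by apply/idP/idP; lia.
have -> : (0 <= - d - 1) = (d < 0) by apply/idP/idP; lia.
have -> : (0 <= d - p) = (p <= d) by apply/idP/idP; lia.
rewrite /bit_net /bipolar.
by case: (lerP (- p) d); case: (lerP p d); case: (ltrP d 0) => /= *;
  first [lra | lia].
Qed.

Lemma bipolar_pm1 (R : numDomainType) (x : bool) :
  bipolar x = 1 :> R \/ bipolar x = -1 :> R.
Proof. by case: x; [left | right]; rewrite /bipolar /= ?mulr1 ?addrK ?mulr0 ?sub0r. Qed.

Theorem proposition1 (R : realFieldType) (N : nat) (hN : (1 <= N)%N)
    (a b : 'I_N -> bool) (i : 'I_N) :
  (r_out (R := R) a b i = 1 \/ r_out (R := R) a b i = -1) /\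
  r_out (R := R) a b i = bipolar (sub_bits a b i).
Proof.
set P := (2 ^ (N.-1 - i))%N.
set D : int := (suffix_val a i)%:Z - (suffix_val b i)%:Z.
have twoP : (2 ^ (N - i) = P * 2)%N.
  by rewrite -expnSr; congr (2 ^ _)%N; have := ltn_ord i; lia.
have D_bounds : - (2 * P%:Z) < D < 2 * P%:Z.
  have := suffix_val_lt a i; have := suffix_val_lt b i; rewrite twoP /D.
  by move=> *; apply/andP; split; lia.
have congr_D : (tc_val a - tc_val b = D %[mod (P * 2)%N%:Z])%Z.
  apply/eqP; rewrite eqz_mod_dvd -twoP.
  have -> : tc_val a - tc_val b - D
          = (tc_val a - (suffix_val a i)%:Z) - (tc_val b - (suffix_val b i)%:Z).
    by rewrite /D; ring.
  by rewrite rpredB // tc_val_suffix_dvd.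
have r_bit : r_out a b i = bipolar (P%:Z <= D %% (2 * P%:Z))%Z :> R.
  rewrite r_outE Dsum_suffix.
  have -> : (2 : R) ^+ (N - 1 - i) = P%:Z%:~R by rewrite -pmulrn natrX subn1.
  exact: bit_net_int.
have sub_bit : sub_bits a b i = (P%:Z <= D %% (2 * P%:Z))%Z.
  by rewrite /sub_bits tc_bitE -/P congr_D PoszM mulrC.
by rewrite r_bit sub_bit; split => //; exact: bipolar_pm1.
Qed.
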